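(* Let $i,j,h,k\in\{1,2,3\}$ with $i<j$, $h<k$. (1) If $Q\in R$ does not depend on $x_{ij}$, then there exists $\widetilde Q\in R$ not depending on $x_{ij}$ such that $D_4\widetilde Q=Q$. (2) If $Q\in R$ depends neither on $x_{ij}$ nor on $x_{hk}$, then there exists $\widetilde Q\in R$ depending neither on $x_{ij}$ nor on $x_{hk}$ such that $D_4\widetilde Q=Q$.
   Context: $R=\mathrm{Sym}(\mathbb C^4)\otimes\mathrm{Sym}(\Lambda^2\mathbb C^4)$ is identified with the polynomial ring $\mathbb C[x_1,x_2,x_3,x_4,x_{12},x_{13},x_{14},x_{23},x_{24},x_{34}]$, $\partial_i=\partial/\partial x_i$, $\partial_{ij}=\partial/\partial x_{ij}$, and $D_4=\partial_{12}\partial_3-\partial_{13}\partial_2+\partial_{23}\partial_1$. *)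

From HB Require Import structures.
From mathcomp Require Import all_boot all_order all_algebra.
From mathcomp Require Import reals.
From mathcomp Require Import complex.
From mathcomp Require Import mpoly.
Set Implicit Arguments. Unset Strict Implicit. Unset Printing Implicit Defensive.
Import GRing.Theory Num.Theory.
Local Open Scope ring_scope.

(* Variable indexing of R = Sym(C^4) (x) Sym(Lambda^2 C^4) = C[x_1..x_4, x_12..x_34]:
   x1 -> 0, x2 -> 1, x3 -> 2, x4 -> 3,
   x12 -> 4, x13 -> 5, x14 -> 6, x23 -> 7, x24 -> 8, x34 -> 9. *)
Definition v1 : 'I_10 := @Ordinal 10 0 erefl.
Definition v2 : 'I_10 := @Ordinal 10 1 erefl.
Definition v3 : 'I_10 := @Ordinal 10 2 erefl.
Definition v4 : 'I_10 := @Ordinal 10 3 erefl.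
Definition v12 : 'I_10 := @Ordinal 10 4 erefl.
Definition v13 : 'I_10 := @Ordinal 10 5 erefl.
Definition v14 : 'I_10 := @Ordinal 10 6 erefl.
Definition v23 : 'I_10 := @Ordinal 10 7 erefl.
Definition v24 : 'I_10 := @Ordinal 10 8 erefl.
Definition v34 : 'I_10 := @Ordinal 10 9 erefl.

Notation Rpoly C := {mpoly C[10]}.

Definition D4 {C : comRingType} (p : Rpoly C) : Rpoly C :=
  (p^`M(v3))^`M(v12) - (p^`M(v2))^`M(v13) + (p^`M(v1))^`M(v23).

Definition indep {C : comRingType} (v : 'I_10) (p : Rpoly C) : Prop :=
  forall m, m \in msupp p -> m v = 0%N.

Definition is_x123 (v : 'I_10) : bool := v \in [:: v12; v13; v23].

From HB Require Import structures.
From mathcomp Require Import all_boot all_order all_algebra.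
From mathcomp Require Import reals complex mpoly.
From mathcomp Require Import zify.
Import GRing.Theory Num.Theory.
Local Open Scope ring_scope.

(* Each of x12, x13, x23 occurs in exactly one term of D4, so on polynomials
   free of x_a (a one of them) that term vanishes and
   D4 = s1 d_u d_w + s2 d_w' d_b, with b another of x12, x13, x23 and
   x_u, x_w different from x_a, x_b.  The first operator is inverted on
   monomials by integrating in x_u and x_w, which introduces neither x_a nor
   x_b; the error left by the second term has lower degree in x_b, so
   induction on that degree solves D4 Qt = Q.  If Q is also free of x_b the
   error vanishes and the integral itself is a solution free of both.
   Rotating the three terms of D4, every pair of distinct variables among
   x12, x13, x23 arises as (a, b). *)

Lemma msupp_ind (n : nat) (R : nzRingType) (P : 'X_{1..n} -> Prop)
    (G : {mpoly R[n]} -> Prop) :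
  G 0 -> (forall p q, G p -> G q -> G (p + q)) ->
  (forall c m, P m -> G (c *: 'X_[m])) ->
  forall p, {in msupp p, forall m, P m} -> G p.
Proof.
move=> G0 GD GX p; rewrite [p in G p]mpolyE.
elim: (msupp p) => [|m s IH] Ps; first by rewrite big_nil.
rewrite big_cons; apply: GD; first by apply/GX/Ps; rewrite mem_head.
by apply: IH => m' hm'; apply: Ps; rewrite in_cons hm' orbT.
Qed.

Section Monomials.
Variables (n : nat) (R : nzRingType).
Implicit Types (m : 'X_{1..n}) (u v w : 'I_n).

Lemma mderiv2X u w m :
  ('X_[m] : {mpoly R[n]})^`M(w)^`M(u) =
    ((m w) * (m - U_(w))%MM u)%:R *: 'X_[m - U_(w) - U_(u)].
Proof. by rewrite mderivX mderivZ mderivX scalerA -natrM. Qed.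

Lemma mnm_add2_notin u w v m :
  v \notin [:: u; w] -> (m + U_(u) + U_(w))%MM v = m v.
Proof.
rewrite !inE negb_or => /andP[vu vw].
by rewrite !mnmDE !mnm1E eq_sym (negbTE vu) eq_sym (negbTE vw) !addn0.
Qed.

End Monomials.

Section Antiderivative.
Variables (n : nat) (C : numFieldType).
Implicit Types (m : 'X_{1..n}) (u v w : 'I_n).

Definition antiderivX u w m : {mpoly C[n]} :=
  ((m u).+1 * (m w).+1)%:R^-1 *: 'X_[m + U_(u) + U_(w)].

Lemma antiderivXK u w m : u != w -> (antiderivX u w m)^`M(w)^`M(u) = 'X_[m].
Proof.
move=> uw; rewrite mderivZ mderivZ mderiv2X.
have -> : (m + U_(u) + U_(w) - U_(w))%MM = (m + U_(u))%MM by rewrite addmK.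
rewrite addmK scalerA !mnmDE !mnm1E !eqxx (negbTE uw) addn0 !addn1 mulnC.
by rewrite mulVf ?scale1r // pnatr_eq0.
Qed.

End Antiderivative.
Arguments antiderivX {n C} u w m.

Section Independence.
Context {C : comNzRingType}.
Implicit Types (p q : Rpoly C) (m : 'X_{1..10}) (u v w : 'I_10).

Lemma indep0 v : indep v (0 : Rpoly C).
Proof. by move=> m; rewrite msupp0. Qed.

Lemma indepD v p q : indep v p -> indep v q -> indep v (p + q).
Proof. by move=> hp hq m /msuppD_le; rewrite mem_cat => /orP[/hp|/hq]. Qed.

Lemma indepZ v (c : C) p : indep v p -> indep v (c *: p).
Proof. by move=> hp m /msuppZ_le /hp. Qed.

Lemma indepX v m : m v = 0%N -> indep v ('X_[m] : Rpoly C).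
Proof. by move=> hm m'; rewrite msuppX inE => /eqP ->. Qed.

Lemma mderiv_indep {v p} : indep v p -> p^`M(v) = 0.
Proof.
move=> hp; rewrite (mpolyE p) raddf_sum big_seq big1 // => m /hp hm.
by rewrite /= mderivZ mderivX hm scale0r scaler0.
Qed.

Lemma mderiv2_indep {u} w {p} : indep u p -> p^`M(w)^`M(u) = 0.
Proof. by move=> hp; rewrite mderiv_comm (mderiv_indep hp) mderiv0. Qed.

End Independence.

Section SecondOrderSolve.
Variables (C : numFieldType) (L : Rpoly C -> Rpoly C).
Variables (a u1 w1 u2 w2 : 'I_10) (s1 s2 : C).
Hypotheses (s1_neq0 : s1 != 0) (u1w1 : u1 != w1).
Hypotheses (a_notin : a \notin [:: u1; w1]) (u2_notin : u2 \notin [:: u1; w1]).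
Hypothesis L_indep : forall p, indep a p ->
  L p = s1 *: p^`M(w1)^`M(u1) + s2 *: p^`M(w2)^`M(u2).

Implicit Types (p q : Rpoly C) (m : 'X_{1..10}).

Lemma L_add p q : indep a p -> indep a q -> L (p + q) = L p + L q.
Proof.
move=> hp hq; rewrite !L_indep //; last exact: indepD.
by rewrite !raddfD addrACA.
Qed.

Lemma L_scale (c : C) p : indep a p -> L (c *: p) = c *: L p.
Proof.
move=> hp; rewrite !L_indep //; last exact: indepZ.
by rewrite !mderivZ scalerDr !scalerA (mulrC s1) (mulrC s2).
Qed.

Lemma solvable_of_monomials (P : Rpoly C -> Prop) (Pm : 'X_{1..10} -> Prop) :
  P 0 -> (forall p q, P p -> P q -> P (p + q)) ->
  (forall (c : C) p, P p -> P (c *: p)) -> (forall p, P p -> indep a p) ->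
  (forall m, Pm m -> exists2 pt, P pt & L pt = 'X_[m]) ->
  forall q, {in msupp q, forall m, Pm m} -> exists2 pt, P pt & L pt = q.
Proof.
move=> P0 PD PZ Pa solX; apply: msupp_ind.
- by exists 0 => //; rewrite -[0](scale0r 0) L_scale ?scale0r //; apply: Pa.
- move=> _ _ [p Pp <-] [q Pq <-]; exists (p + q); first exact: PD.
  by rewrite L_add //; apply: Pa.
- move=> c m /solX [p Pp <-]; exists (c *: p); first exact: PZ.
  by rewrite L_scale //; apply: Pa.
Qed.

Let pre m : Rpoly C := s1^-1 *: antiderivX u1 w1 m.

Lemma indep_pre v m : v \notin [:: u1; w1] -> m v = 0%N -> indep v (pre m).
Proof. by move=> vn hm; apply/indepZ/indepZ/indepX; rewrite mnm_add2_notin. Qed.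

Lemma L_pre m : m a = 0%N ->
  L (pre m) = 'X_[m] + s2 *: (pre m)^`M(w2)^`M(u2).
Proof.
move=> hm; rewrite L_indep; last exact: indep_pre.
by rewrite {1}/pre !(mderivZ _ s1^-1) antiderivXK // scalerA mulfV ?scale1r.
Qed.

Lemma L_pre_indep m : m a = 0%N -> m u2 = 0%N -> L (pre m) = 'X_[m].
Proof.
move=> ha hu2; rewrite L_pre // mderiv2_indep ?scaler0 ?addr0 //.
exact: indep_pre.
Qed.

Lemma solve_monomial m : m a = 0%N -> exists2 pt, indep a pt & L pt = 'X_[m].
Proof.
have [k] := ubnP (m u2); elim: k m => // k IH m hk ham.
have [mu2_0 | mu2_gt0] := posnP (m u2).
  by exists (pre m); [apply: indep_pre | apply: L_pre_indep].
set m' := (m + U_(u1) + U_(w1))%MM.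
set m'' := (m' - U_(w2) - U_(u2))%MM.
have m'E v : v \notin [:: u1; w1] -> m' v = m v by exact: mnm_add2_notin.
(* the second term of L lowers the degree in x_u2 *)
have [||pt hpt Lpt] := IH m''.
- by rewrite /m'' !mnmBE m'E // !mnm1E eqxx; lia.
- by rewrite /m'' !mnmBE m'E // ham.
have [c errE] : exists c, (pre m)^`M(w2)^`M(u2) = c *: 'X_[m''].
  by rewrite /pre /antiderivX !mderivZ mderiv2X !scalerA; eexists.
have hpre : indep a (pre m) by apply: indep_pre.
exists (pre m + (- (s2 * c)) *: pt); first by apply: indepD => //; apply: indepZ.
rewrite L_add //; last exact: indepZ.
by rewrite (L_scale _ pt) // L_pre // errE Lpt scalerA scaleNr addrK.
Qed.

Lemma solve_indep q : indep a q -> exists2 pt, indep a pt & L pt = q.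
Proof.
apply: (solvable_of_monomials (indep a) (fun m => m a = 0%N)).
- exact: indep0.
- exact: indepD.
- exact: indepZ.
- by [].
- exact: solve_monomial.
Qed.

Lemma solve_indep2 q : indep a q -> indep u2 q ->
  exists2 pt, indep a pt /\ indep u2 pt & L pt = q.
Proof.
move=> ha hu2; apply: (solvable_of_monomials
  (fun p => indep a p /\ indep u2 p) (fun m => m a = 0%N /\ m u2 = 0%N));
  last by move=> m hm; split; [apply: ha | apply: hu2].
- by split; apply: indep0.
- by move=> p p' [? ?] [? ?]; split; apply: indepD.
- by move=> c p [? ?]; split; apply: indepZ.
- by move=> p [].
- move=> m [hma hmu2]; exists (pre m); last exact: L_pre_indep.
  by split; apply: indep_pre.
Qed.

End SecondOrderSolve.

Definition D4_split (C : numFieldType) (a b : 'I_10) : Prop :=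
  exists (u1 w1 w2 : 'I_10) (s1 s2 : C),
    [/\ s1 != 0, u1 != w1, a \notin [:: u1; w1], b \notin [:: u1; w1] &
        forall p, indep a p ->
          D4 p = s1 *: p^`M(w1)^`M(u1) + s2 *: p^`M(w2)^`M(b)].

Section D4Split.
Context {C : numFieldType}.

Lemma D4_split12 : D4_split C v12 v23.
Proof.
exists v13, v2, v1, (-1), 1; split=> // [|p hp]; first by rewrite oppr_eq0 oner_eq0.
by rewrite /D4 (mderiv2_indep _ hp) add0r scaleN1r scale1r.
Qed.

Lemma D4_split23 : D4_split C v23 v13.
Proof.
exists v12, v3, v2, 1, (-1); split=> // [|p hp]; first by rewrite oner_eq0.
by rewrite /D4 (mderiv2_indep _ hp) addr0 scaleN1r scale1r.
Qed.

Lemma D4_split13 : D4_split C v13 v12.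
Proof.
exists v23, v1, v3, 1, 1; split=> // [|p hp]; first by rewrite oner_eq0.
by rewrite /D4 (mderiv2_indep _ hp) subr0 !scale1r addrC.
Qed.

Lemma D4_split_x123 a : is_x123 a -> exists b, D4_split C a b.
Proof.
by rewrite /is_x123 !inE => /or3P[]/eqP->; eexists;
  [exact: D4_split12 | exact: D4_split13 | exact: D4_split23].
Qed.

Lemma D4_split_pair {a b} : is_x123 a -> is_x123 b -> a != b ->
  D4_split C a b \/ D4_split C b a.
Proof.
rewrite /is_x123 !inE => /or3P[]/eqP-> /or3P[]/eqP-> //= _;
  by [left; apply: D4_split12 | left; apply: D4_split23 | left; apply: D4_split13
     | right; apply: D4_split12 | right; apply: D4_split23 | right; apply: D4_split13].
Qed.

Lemma D4_split_solve2 a b (Q : Rpoly C) : D4_split C a b ->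
  indep a Q -> indep b Q -> exists2 Qt, indep a Qt /\ indep b Qt & D4 Qt = Q.
Proof. by case=> u1 [w1 [w2 [s1 [s2 [? ? ? ? /solve_indep2]]]]]; apply. Qed.

Lemma D4_solve {a} {Q : Rpoly C} : is_x123 a -> indep a Q ->
  exists2 Qt, indep a Qt & D4 Qt = Q.
Proof.
by move=> /D4_split_x123 [b [u1 [w1 [w2 [s1 [s2 [? ? ? ? /solve_indep]]]]]]]; apply.
Qed.

Lemma D4_solve2 {a b} {Q : Rpoly C} : is_x123 a -> is_x123 b ->
  indep a Q -> indep b Q -> exists2 Qt, indep a Qt /\ indep b Qt & D4 Qt = Q.
Proof.
move=> xa xb qa qb; have [<- | neq_ab] := eqVneq a b.
  by have [Qt] := D4_solve xa qa; exists Qt.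
case: (D4_split_pair xa xb neq_ab) => [/D4_split_solve2 | /D4_split_solve2 solve_ba].
  exact.
by have [Qt [] *] := solve_ba Q qb qa; exists Qt.
Qed.

End D4Split.

Theorem mainTheorem6 (R : realType) :
  (forall a : 'I_10, is_x123 a ->
     forall Q : Rpoly R[i], indep a Q ->
       exists Qt : Rpoly R[i], indep a Qt /\ D4 Qt = Q) /\
  (forall a b : 'I_10, is_x123 a -> is_x123 b ->
     forall Q : Rpoly R[i], indep a Q -> indep b Q ->
       exists Qt : Rpoly R[i], indep a Qt /\ indep b Qt /\ D4 Qt = Q).
Proof.
split=> [a xa Q qa | a b xa xb Q qa qb].
  by have [Qt] := D4_solve xa qa; exists Qt.
by have [Qt [] *] := D4_solve2 xa xb qa qb; exists Qt.
Qed.
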